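(* In the setting described in the context: if $(\Gamma,u,y,z)$ satisfies (P1) $\alpha_{ij}\hat{x}_j+u_{ij}\ge0$ and $-\alpha_{ij}\hat{x}_j+u_{ij}\ge0$ for all $j\in J_i,i\in I$; (P2) $y_{ij}+z_i\ge u_{ij}$ for all $j\in J_i,i\in I$; (P3) $\sum_{j\in J}a_{ij}\hat{x}_j-\sum_{j\in J_i}y_{ij}-\Gamma_iz_i\ge b_i$ for all $i\in I$; (P4) $y_{ij}\ge0$, $z_i\ge0$ for all $j\in J_i,i\in I$; (P5) $0\le\Gamma_i\le|J_i|$ for all $i\in I$, then $\Gamma\in\Theta$. Conversely, if $\sum_{j\in J}a_{ij}\hat{x}_j\ge b_i$ for all $i\in I$ and $\Gamma\in\Theta$, then there exists $(u,y,z)$ such that $(\Gamma,u,y,z)$ satisfies (P1)–(P5).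
   Context: Let $I=\{1,\dots,m\}$, $J=\{1,\dots,n\}$. Given are $a_{ij}\in\mathbb{R}$ ($i\in I,j\in J$), $b\in\mathbb{R}^m$, index sets $J_i\subseteq J$, nonnegative numbers $\alpha_{ij}$ ($j\in J_i,i\in I$), and an observed point $\hat{x}\in\mathbb{R}^n$. For $i\in I$ and $x\in\mathbb{R}^n$ let $j^i_1(x),\dots,j^i_{|J_i|}(x)$ be an ordering of $J_i$ such that $\alpha_{ij^i_k(x)}|x_{j^i_k(x)}|$ is the $k$-th largest element of $\{\alpha_{ij}|x_j|\}_{j\in J_i}$. For $\Gamma_i\in[0,|J_i|]$ define the protection value \[ P_i(\Gamma_i,x)=\sum_{k=1}^{\lfloor\Gamma_i\rfloor}\alpha_{ij^i_k(x)}|x_{j^i_k(x)}|+(\Gamma_i-\lfloor\Gamma_i\rfloor)\alpha_{ij^i_{\lceil\Gamma_i\rceil}(x)}|x_{j^i_{\lceil\Gamma_i\rceil}(x)}| \] (the last term being $0$ when $\Gamma_i$ is an integer). Let $s_i=\sum_{j\in J}a_{ij}\hat{x}_j-b_i$ and $\hat{I}=\{i\in I:0\le s_i\le\sum_{j\in J_i}\alpha_{ij}|\hat{x}_j|\}$. For $i\in\hat{I}$ let $\underline{\Gamma}_i=\min\{\sum_{j\in J_i}w_j: \sum_{j\in J_i}\alpha_{ij}|\hat{x}_j|w_j=s_i,\ 0\le w_j\le1\}$; it satisfies $s_i=P_i(\underline{\Gamma}_i,\hat{x})$. Standing assumption: for each $i\in\hat{I}$, $\underline{\Gamma}_i$ is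 the unique $\Gamma_i\in[0,|J_i|]$ with $s_i=P_i(\Gamma_i,\hat{x})$. Define $\Theta=\{\Gamma\in\mathbb{R}^m:\Gamma_i\in[0,\underline{\Gamma}_i]\ \forall i\in\hat{I};\ \Gamma_i\in[0,|J_i|]\ \forall i\in I\setminus\hat{I}\}$. The variables $u_{ij},y_{ij}$ ($j\in J_i,i\in I$), $z_i$ ($i\in I$), $\Gamma\in\mathbb{R}^m$ are real. *)

From HB Require Import structures.
From mathcomp Require Import all_boot all_order all_algebra.
From mathcomp Require Import classical_sets reals.
Set Implicit Arguments. Unset Strict Implicit. Unset Printing Implicit Defensive.
Import Order.TTheory GRing.Theory Num.Theory.
Local Open Scope ring_scope.
Local Open Scope classical_set_scope.

Section RobustDefs.
Variables (R : realType) (m n : nat).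
Variables (a : 'I_m -> 'I_n -> R) (b : 'I_m -> R) (J : 'I_m -> {set 'I_n})
          (alpha : 'I_m -> 'I_n -> R) (xh : 'I_n -> R).

Definition sorted_vals (i : 'I_m) (x : 'I_n -> R) : seq R :=
  sort (fun p q : R => q <= p) [seq alpha i j * `|x j| | j <- enum (J i)].

(* protection value P_i(G, x); 0-based index: the k-th largest is nth 0 s k.
   The fractional term uses the ceil(G)-th largest, i.e. index floor(G)
   when G is not an integer (when G is an integer the term is 0). *)
Definition Pprot (i : 'I_m) (G : R) (x : 'I_n -> R) : R :=
  let s := sorted_vals i x in
  let f := Num.floor G in
  \sum_(k < `|f|%N) nth 0 s k + (G - f%:~R) * nth 0 s `|f|%N.

Definition slack (i : 'I_m) : R := \sum_(j < n) a i j * xh j - b i.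

Definition inIhat (i : 'I_m) : Prop :=
  0 <= slack i /\ slack i <= \sum_(j in J i) alpha i j * `|xh j|.

Definition Gamma_low (i : 'I_m) : R :=
  inf [set t : R | exists w : 'I_n -> R,
         (forall j, j \in J i -> 0 <= w j <= 1) /\
         \sum_(j in J i) alpha i j * `|xh j| * w j = slack i /\
         t = \sum_(j in J i) w j].

Definition inTheta (G : 'I_m -> R) : Prop :=
  forall i, (inIhat i -> 0 <= G i <= Gamma_low i) /\
            (~ inIhat i -> 0 <= G i <= #|J i|%:R).

Definition feasible (G : 'I_m -> R) (u y : 'I_m -> 'I_n -> R) (z : 'I_m -> R) : Prop :=
  (forall i j, j \in J i -> 0 <= alpha i j * xh j + u i j /\ 0 <= - alpha i j * xh j + u i j) /\
  (forall i j, j \in J i -> u i j <= y i j + z i) /\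
  (forall i, b i <= \sum_(j < n) a i j * xh j - \sum_(j in J i) y i j - G i * z i) /\
  (forall i, (forall j, j \in J i -> 0 <= y i j) /\ 0 <= z i) /\
  (forall i, 0 <= G i <= #|J i|%:R).

End RobustDefs.

From HB Require Import structures.
From mathcomp Require Import all_boot all_order all_algebra.
From mathcomp Require Import classical_sets reals boolp ring lra.
Import Order.TTheory GRing.Theory Num.Theory.
Local Open Scope ring_scope.

(* Row i of (P1)-(P5) is the dual of the linear program
     P_i(G, x) = max { sum_j c_j w_j : 0 <= w_j <= 1, sum_j w_j <= G },  c_j = alpha_ij |x_j|.
   If z_i > 0, every weight vector w in the set defining the lower bound gives
   G_i z_i <= s_i - sum_j y_ij <= z_i sum_j w_j, so G_i lies below the infimum; if z_i = 0,
   the row forces s_i = sum_j c_j = P_i(|J_i|, x) and uniqueness makes the lower bound |J_i|.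
   Conversely, take B the lower bound on Ihat and B = |J_i| elsewhere (where
   s_i > sum_j c_j = P_i(|J_i|, x)).  The dual point z_i = (floor B + 1)-th largest c_j,
   y_ij = (c_j - z_i)^+ has value P_i(B, x) <= s_i and stays feasible for all G_i <= B. *)

Section RealFacts.
Context {R : realType}.

Lemma floor_natr (k : nat) : Num.floor (k%:R : R) = k%:Z.
Proof. by apply: floor_def; rewrite intrD lexx /=; lra. Qed.

Lemma pmul_norm_le (al x u : R) : 0 <= al ->
  (al * `|x| <= u) <-> (0 <= al * x + u /\ 0 <= - al * x + u).
Proof.
move=> al0; rewrite -{1}[al]ger0_norm // -normrM ler_norml mulNr.
by split=> [/andP[h1 h2]|[h1 h2]]; [split|apply/andP; split]; lra.
Qed.

Lemma sum_weighted_le (n : nat) (A : {set 'I_n}) (c w y : 'I_n -> R) (z : R) :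
  (forall j, j \in A -> [/\ 0 <= w j <= 1, 0 <= y j & c j <= y j + z]) ->
  \sum_(j in A) c j * w j <= \sum_(j in A) y j + z * \sum_(j in A) w j.
Proof.
move=> hA; rewrite mulr_sumr -big_split /=; apply: ler_sum => j /hA [/andP[w0 w1] y0 cyz].
have : c j * w j <= (y j + z) * w j by exact: ler_wpM2r.
have : y j * w j <= y j by rewrite -[leRHS]mulr1 ler_wpM2l.
lra.
Qed.

Lemma sum_ord_widen (F : nat -> R) {n1 n2 : nat} : (n1 <= n2)%N ->
  (forall i, (n1 <= i < n2)%N -> F i = 0) ->
  \sum_(i < n1) F i = \sum_(i < n2) F i.
Proof.
move=> le12 F0; rewrite -!(big_mkord xpredT) (big_cat_nat _ le12) //=.
by rewrite [X in _ = _ + X]big1_seq ?addr0 // => i /andP[_]; rewrite mem_index_iota => /F0.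
Qed.

End RealFacts.

Section Protection.
Context {R : realType}.
Implicit Types (s : seq R) (G : R).

Definition prot s G : R :=
  \sum_(k < `|Num.floor G|%N) s`_k
  + (G - (Num.floor G)%:~R) * s`_`|Num.floor G|%N.

Lemma prot_nat s (k : nat) : prot s k%:R = \sum_(i < k) s`_i.
Proof. by rewrite /prot floor_natr absz_nat subrr mul0r addr0. Qed.

Lemma prot_size s : prot s (size s)%:R = \sum_(x <- s) x.
Proof. by rewrite prot_nat (big_nth 0) big_mkord. Qed.

Section Nonincreasing.
Context {s : seq R}.
Hypothesis s_ge0 : all (fun x => 0 <= x) s.
Hypothesis s_nonincr : sorted (fun p q : R => q <= p) s.

Lemma nth_nonincr_ge0 k : 0 <= s`_k.
Proof.
case: (ltnP k (size s)) => hk; last by rewrite nth_default.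
by move/allP: s_ge0; apply; rewrite mem_nth.
Qed.

(* [s`_j = 0] beyond [size s], so no bound on [j] is needed. *)
Lemma nth_nonincr i j : (i <= j)%N -> s`_j <= s`_i.
Proof.
move=> ij; case: (ltnP j (size s)) => js; last by rewrite nth_default ?nth_nonincr_ge0.
have tr : transitive (fun p q : R => q <= p) by move=> x y w /= h1 h2; apply: le_trans h2 h1.
have rf : reflexive (fun p q : R => q <= p) by move=> x /=.
by apply: (sorted_leq_nth tr rf 0 s_nonincr) => //; rewrite inE (leq_ltn_trans ij).
Qed.

Lemma sum_pos_part_nonincr k :
  \sum_(x <- s) Num.max 0 (x - s`_k) = \sum_(i < k) (s`_i - s`_k).
Proof.
set F := fun i => Num.max 0 (s`_i - s`_k).
have F_head i : (i < k)%N -> F i = s`_i - s`_k.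
  by move=> ik; apply: max_r; rewrite subr_ge0 nth_nonincr // ltnW.
have F_tail i : (k <= i)%N -> F i = 0.
  by move=> ki; apply: max_l; rewrite subr_le0 nth_nonincr.
have F_out i : (size s <= i)%N -> F i = 0.
  by move=> si; apply: max_l; rewrite nth_default // sub0r oppr_le0 nth_nonincr_ge0.
rewrite (big_nth 0) big_mkord -/(\sum_(i < size s) F i).
rewrite (sum_ord_widen F (leq_addr k _)); last by move=> i /andP[/F_out].
rewrite -(sum_ord_widen F (leq_addl _ k)); last by move=> i /andP[/F_tail].
by apply: eq_bigr => i _; rewrite F_head.
Qed.

Lemma prot_nonincr G : 0 <= G ->
  prot s G = \sum_(x <- s) Num.max 0 (x - s`_`|Num.floor G|%N)
             + G * s`_`|Num.floor G|%N.
Proof.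
move=> G0; rewrite sum_pos_part_nonincr /prot sumrB sumr_const card_ord.
by rewrite -[in LHS](@gez0_abs (Num.floor G)) ?floor_ge0 //; ring.
Qed.

Lemma pos_part_le_prot g G : 0 <= g <= G ->
  \sum_(x <- s) Num.max 0 (x - s`_`|Num.floor G|%N) + g * s`_`|Num.floor G|%N
  <= prot s G.
Proof.
move=> /andP[g0 gG]; rewrite prot_nonincr ?(le_trans g0) // lerD2l.
by rewrite ler_wpM2r ?nth_nonincr_ge0.
Qed.

End Nonincreasing.
End Protection.

Section SortedValues.
Context {R : realType} {m n : nat} {J : 'I_m -> {set 'I_n}}.
Context {alpha : 'I_m -> 'I_n -> R} {x : 'I_n -> R} {i : 'I_m}.

Local Notation s := (sorted_vals J alpha i x).

Lemma PprotE G : Pprot J alpha i G x = prot s G.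
Proof. by []. Qed.

Lemma big_sorted_vals (F : R -> R) :
  \sum_(v <- s) F v = \sum_(j in J i) F (alpha i j * `|x j|).
Proof.
rewrite (perm_big [seq alpha i j * `|x j| | j <- enum (J i)]) ?perm_sort //.
by rewrite big_map big_enum.
Qed.

Lemma size_sorted_vals : size s = #|J i|.
Proof. by rewrite size_sort size_map -cardE. Qed.

Lemma sorted_vals_nonincr : sorted (fun p q : R => q <= p) s.
Proof. by apply: sort_sorted => p q; exact: le_total. Qed.

Lemma sorted_vals_ge0 : (forall j, j \in J i -> 0 <= alpha i j) ->
  all (fun v => 0 <= v) s.
Proof.
move=> alpha_ge0; rewrite all_sort; apply/allP => v /mapP [j].
by rewrite mem_enum => hj ->; rewrite mulr_ge0 ?alpha_ge0.
Qed.

Lemma Pprot_card : Pprot J alpha i #|J i|%:R x = \sum_(j in J i) alpha i j * `|x j|.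
Proof. by rewrite PprotE -size_sorted_vals prot_size (big_sorted_vals id). Qed.

End SortedValues.

Section RobustCounterpart.
Variables (R : realType) (m n : nat).
Variables (a : 'I_m -> 'I_n -> R) (b : 'I_m -> R) (J : 'I_m -> {set 'I_n}).
Variables (alpha : 'I_m -> 'I_n -> R) (xh : 'I_n -> R).
Hypothesis alpha_ge0 : forall i j, j \in J i -> 0 <= alpha i j.
Hypothesis Gamma_low_unique : forall i, inIhat a b J alpha xh i ->
  forall G : R, (0 <= G <= #|J i|%:R /\ slack a b xh i = Pprot J alpha i G xh)
                <-> G = Gamma_low a b J alpha xh i.

Local Notation slack := (slack a b xh).
Local Notation inIhat := (inIhat a b J alpha xh).
Local Notation Gamma_low := (Gamma_low a b J alpha xh).
Local Notation c i j := (alpha i j * `|xh j|).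

Definition admissible_weights i (w : 'I_n -> R) : Prop :=
  (forall j, j \in J i -> 0 <= w j <= 1) /\ \sum_(j in J i) c i j * w j = slack i.

Lemma Gamma_lowE i :
  Gamma_low i = inf [set t | exists w, admissible_weights i w /\ t = \sum_(j in J i) w j].
Proof.
rewrite /Gamma_low; congr inf; apply/seteqP; split=> t [w].
  by move=> [w01 [ws ->]]; exists w.
by move=> [[w01 ws] ->]; exists w.
Qed.

Lemma Gamma_low_range i : inIhat i -> 0 <= Gamma_low i <= #|J i|%:R.
Proof. by move=> hi; have [] := (Gamma_low_unique i hi (Gamma_low i)).2. Qed.

Lemma slack_Gamma_low i : inIhat i -> slack i = Pprot J alpha i (Gamma_low i) xh.
Proof. by move=> hi; have [] := (Gamma_low_unique i hi (Gamma_low i)).2. Qed.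

Lemma Gamma_low_card i : inIhat i -> slack i = \sum_(j in J i) c i j ->
  Gamma_low i = #|J i|%:R.
Proof.
move=> hi hs; symmetry; apply/(Gamma_low_unique i hi).
by rewrite Pprot_card hs ler0n lexx.
Qed.

Lemma admissible_weights_exist i : inIhat i -> exists w, admissible_weights i w.
Proof.
move=> [s0 sc]; have [c0|cne0] := eqVneq (\sum_(j in J i) c i j) 0.
  exists (fun=> 0); split=> [j _|]; first by rewrite lexx ler01.
  rewrite big1 => [|j _]; last by rewrite mulr0.
  by move: sc; rewrite c0 => sc; apply/eqP; rewrite eq_le s0 sc.
exists (fun=> slack i / \sum_(j in J i) c i j); split=> [j _|].
  have cpos : 0 < \sum_(j in J i) c i j by rewrite lt_def cne0 (le_trans s0 sc).
  by rewrite divr_ge0 ?(ltW cpos) //= ler_pdivrMr // mul1r.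
by rewrite -mulr_suml mulrC divfK.
Qed.

Lemma le_Gamma_low i g : inIhat i ->
  (forall w, admissible_weights i w -> g <= \sum_(j in J i) w j) -> g <= Gamma_low i.
Proof.
move=> hi gw; rewrite Gamma_lowE; apply: lb_le_inf.
  by have [w hw] := admissible_weights_exist i hi; exists (\sum_(j in J i) w j), w.
by move=> t [w [hw ->]]; exact: gw.
Qed.

Definition robust_row i (g : R) (yi : 'I_n -> R) (zi : R) : Prop :=
  [/\ forall j, j \in J i -> 0 <= yi j, 0 <= zi,
      forall j, j \in J i -> c i j <= yi j + zi
    & \sum_(j in J i) yi j + g * zi <= slack i].

Lemma feasible_robust_row {G u y z} :
  feasible a b J alpha xh G u y z -> forall i, robust_row i (G i) (y i) (z i).
Proof.
move=> [P1 [P2 [P3 [P4 _]]]] i; have [y0 z0] := P4 i; split=> //.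
- move=> j hj; apply: le_trans (P2 i j hj).
  by apply/pmul_norm_le; [exact: alpha_ge0 | exact: P1].
- by rewrite /slack; have := P3 i; lra.
Qed.

Lemma robust_row_feasible {G y z} :
  (forall i, 0 <= G i <= #|J i|%:R) -> (forall i, robust_row i (G i) (y i) (z i)) ->
  feasible a b J alpha xh G (fun i j => c i j) y z.
Proof.
move=> G_range rows; split; [|split; [|split; [|split]]] => // i.
- by move=> j hj; apply/pmul_norm_le; rewrite ?alpha_ge0.
- by have [_ _ cyz _] := rows i.
- by have [_ _ _] := rows i; rewrite /slack; lra.
- by have [y0 z0 _ _] := rows i.
Qed.

Lemma robust_row_le_Gamma_low {i g yi zi} : inIhat i ->
  g <= #|J i|%:R -> robust_row i g yi zi -> g <= Gamma_low i.
Proof.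
move=> hi gJ [y0 z0 cyz hrow].
have [zi0|zi_neq0] := eqVneq zi 0.
  rewrite Gamma_low_card //; apply/eqP; rewrite eq_le hi.2 /=.
  apply: le_trans hrow; rewrite zi0 mulr0 addr0; apply: ler_sum => j /cyz.
  by rewrite zi0 addr0.
apply: le_Gamma_low => // w [hw hws].
have : \sum_(j in J i) c i j * w j <= \sum_(j in J i) yi j + zi * \sum_(j in J i) w j.
  by apply: sum_weighted_le => j hj; split; [exact: hw | exact: y0 | exact: cyz].
rewrite hws => hsum; have zi_gt0 : 0 < zi by rewrite lt_def zi_neq0.
by rewrite -(ler_pM2r zi_gt0) [leRHS]mulrC; lra.
Qed.

Lemma inTheta_range {G} : inTheta a b J alpha xh G -> forall i, 0 <= G i <= #|J i|%:R.
Proof.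
move=> hG i; have [hin hout] := hG i; case: (pselect (inIhat i)) => hi; last exact: hout.
have /andP[g0 gl] := hin hi; have /andP[_ glJ] := Gamma_low_range i hi.
by rewrite g0 (le_trans gl glJ).
Qed.

Lemma feasible_inTheta G u y z :
  feasible a b J alpha xh G u y z -> inTheta a b J alpha xh G.
Proof.
move=> hf i; have [_ [_ [_ [_ G_range]]]] := hf; split=> // hi.
have /andP[G0 GJ] := G_range i.
by rewrite G0 (robust_row_le_Gamma_low hi GJ (feasible_robust_row hf i)).
Qed.

Lemma row_budget i g : 0 <= slack i ->
  (inIhat i -> 0 <= g <= Gamma_low i) -> (~ inIhat i -> 0 <= g <= #|J i|%:R) ->
  exists Gb, 0 <= g <= Gb /\ Pprot J alpha i Gb xh <= slack i.
Proof.
move=> s0 hin hout; case: (pselect (inIhat i)) => hi.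
  by exists (Gamma_low i); rewrite hin // -slack_Gamma_low.
exists #|J i|%:R; split; first exact: hout.
by rewrite Pprot_card leNgt; apply/negP => /ltW hc; apply: hi.
Qed.

Lemma robust_row_certificate i g Gb : 0 <= g <= Gb ->
  Pprot J alpha i Gb xh <= slack i -> exists yi zi, robust_row i g yi zi.
Proof.
move=> gGb hP; set s := sorted_vals J alpha i xh.
have s_ge0 : all (fun v => 0 <= v) s by exact: sorted_vals_ge0 (alpha_ge0 i).
pose zi := s`_`|Num.floor Gb|%N.
exists (fun j => Num.max 0 (c i j - zi)), zi; split.
- by move=> j _; rewrite le_max lexx.
- exact: nth_nonincr_ge0 s_ge0 _.
- by move=> j _; rewrite -lerBlDr le_max lexx orbT.
- apply: le_trans hP; rewrite -(big_sorted_vals (fun v => Num.max 0 (v - zi))).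
  exact: pos_part_le_prot s_ge0 sorted_vals_nonincr _ _ gGb.
Qed.

Lemma inTheta_feasible : (forall i, b i <= \sum_(j < n) a i j * xh j) ->
  forall G, inTheta a b J alpha xh G -> exists u y z, feasible a b J alpha xh G u y z.
Proof.
move=> hb G hG.
have row i : exists yz : ('I_n -> R) * R, robust_row i (G i) yz.1 yz.2.
  have [hin hout] := hG i.
  have s0 : 0 <= slack i by rewrite /slack subr_ge0.
  have [Gb [gGb hP]] := row_budget i (G i) s0 hin hout.
  by have [yi [zi hrow]] := robust_row_certificate i (G i) Gb gGb hP; exists (yi, zi).
have [yz rows] := choice row.
exists (fun i j => c i j), (fun i => (yz i).1), (fun i => (yz i).2).
apply: robust_row_feasible; [exact: inTheta_range hG | exact: rows].
Qed.

End RobustCounterpart.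

Theorem lemma2 (R : realType) (m n : nat)
  (a : 'I_m -> 'I_n -> R) (b : 'I_m -> R) (J : 'I_m -> {set 'I_n})
  (alpha : 'I_m -> 'I_n -> R) (xh : 'I_n -> R) :
  (forall i j, j \in J i -> 0 <= alpha i j) ->
  (* standing assumption: Gamma_low i is the unique G in [0,|J_i|] with s_i = P_i(G, xh) *)
  (forall i, inIhat a b J alpha xh i ->
     forall G : R, (0 <= G <= #|J i|%:R /\ slack a b xh i = Pprot J alpha i G xh)
                   <-> G = Gamma_low a b J alpha xh i) ->
  (forall (G : 'I_m -> R) (u y : 'I_m -> 'I_n -> R) (z : 'I_m -> R),
     feasible a b J alpha xh G u y z -> inTheta a b J alpha xh G) /\
  ((forall i, b i <= \sum_(j < n) a i j * xh j) ->
   forall G : 'I_m -> R, inTheta a b J alpha xh G ->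
   exists (u y : 'I_m -> 'I_n -> R) (z : 'I_m -> R), feasible a b J alpha xh G u y z).
Proof.
move=> alpha_ge0 Gamma_low_unique.
by split; [exact: feasible_inTheta | exact: inTheta_feasible].
Qed.
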